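(* Let $f(t)=1+\sum_{i=1}^{d}\binom{x_i}{i}t^{i}$ be a polynomial with positive integer coefficients, where $x_i\ge i-1$ are real numbers, and suppose all roots of $f(t)$ are real. If $x_{i-1}\ge\lceil x_i\rceil$ for all $2\le i\le d$, then $f(t)$ is the $f$-polynomial of a simplicial complex.
   Context: For real $x$ and integer $k\ge0$, $\binom{x}{k}=\frac{x(x-1)\cdots(x-k+1)}{k!}$; for $k\ge1$ and real $y>0$ there is a unique real $x\ge k-1$ with $\binom{x}{k}=y$. A simplicial complex $\Delta$ on a finite ground set is a family of subsets closed under taking subsets; $f_i$ is the number of faces of cardinality $i+1$ ($f_{-1}=1$ counts the empty face), and the $f$-polynomial of a $(d-1)$-dimensional $\Delta$ is $\sum_{i=0}^{d}f_{i-1}t^{i}$. A polynomial is called an $f$-polynomial of a simplicial complex if it equals the $f$-polynomial of some simplicial complex. *)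

From HB Require Import structures.
From mathcomp Require Import all_boot all_order all_algebra.
From mathcomp Require Import reals complex.
Set Implicit Arguments. Unset Strict Implicit. Unset Printing Implicit Defensive.
Import Order.TTheory GRing.Theory Num.Theory.
Local Open Scope ring_scope.

Definition binr (R : fieldType) (x : R) (k : nat) : R :=
  (\prod_(j < k) (x - j%:R)) / (k`!)%:R.

(* A simplicial complex on the finite ground set T: a family of subsets of T
   closed under taking subsets (we require it to be nonempty, i.e. it contains
   the empty face, as f_{-1} = 1). *)
Definition simplicial_complex (T : finType) (D : {set {set T}}) : Prop :=
  set0 \in D /\ forall A B : {set T}, A \in D -> B \subset A -> B \in D.

(* Number of faces of cardinality i (i.e. f_{i-1}). *)
Definition nfaces (T : finType) (D : {set {set T}}) (i : nat) : nat :=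
  #|[set A in D | #|A| == i]|.

(* f-polynomial  sum_i f_{i-1} t^i  (faces have cardinality at most #|T|). *)
Definition fpoly (R : nzRingType) (T : finType) (D : {set {set T}}) : {poly R} :=
  \poly_(i < #|T|.+1) (nfaces D i)%:R.

Definition is_fpoly (R : nzRingType) (p : {poly R}) : Prop :=
  exists (T : finType) (D : {set {set T}}), simplicial_complex D /\ fpoly R D = p.

Definition real_rooted (R : rcfType) (p : {poly R}) : Prop :=
  forall z : R[i], root (map_poly (real_complex R) p) z -> complex.Im z = 0.

From HB Require Import structures.
From mathcomp Require Import all_boot all_order all_algebra.
From mathcomp Require Import reals complex.
From mathcomp Require Import zify.
Set Implicit Arguments. Unset Strict Implicit. Unset Printing Implicit Defensive.
Import Order.TTheory GRing.Theory Num.Theory.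
Local Open Scope ring_scope.

(* Let m_i = ceil x_i and n_i = binom(x_i, i).  Since binom(-, i) is monotone
   on [i - 1, oo) and m_(i+1) <= x_i <= m_i, we get
   binom(m_(i+1), i) <= n_i <= binom(m_i, i), and m is nonincreasing.  On the
   vertices 0, ..., m_1 - 1 take as i-faces all i-subsets of the first m_(i+1)
   vertices together with further i-subsets of the first m_i vertices, n_i in
   total.  A j-subset (0 < j < i) of an i-face lies in the first
   m_i <= m_(j+1) vertices, so it is itself a face: the family is a simplicial
   complex with f-vector (1, n_1, ..., n_d). *)

Lemma binr_nat (R : numFieldType) (k i : nat) : binr (k%:R : R) i = 'C(k, i)%:R.
Proof.
rewrite /binr.
have -> : \prod_(j < i) (k%:R - j%:R : R) = (k ^_ i)%:R.
  elim: i k => [|i IH] k; first by rewrite big_ord0 ffactn0.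
  rewrite big_ord_recl ffactnS subr0 natrM.
  case: k => [|k]; first by rewrite !mul0r.
  rewrite -IH; congr (_ * _); apply: eq_bigr => j _.
  by rewrite /= !mulrSr opprD addrACA subrr addr0.
by rewrite -bin_ffact natrM mulfK // pnatr_eq0 -lt0n fact_gt0.
Qed.

Lemma ler_binr (R : numFieldType) (k : nat) (y z : R) :
  k.-1%:R <= y -> y <= z -> binr y k <= binr z k.
Proof.
move=> hy hyz; rewrite /binr; apply: ler_wpM2r; first by rewrite invr_ge0 ler0n.
apply: ler_prod => j _; rewrite subr_ge0 lerD2r hyz andbT.
apply: le_trans hy; rewrite ler_nat; have := ltn_ord j; lia.
Qed.

Lemma exists_sandwiched_set (T : finType) (S U : {set T}) (n : nat) :
  S \subset U -> (#|S| <= n <= #|U|)%N ->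
  exists G : {set T}, [/\ S \subset G, G \subset U & #|G| = n].
Proof.
move=> + /andP[leSn lenU]; rewrite -(subnKC leSn) in lenU *.
move: (n - #|S|)%N lenU => k; clear leSn.
elim: k S => [|k IH] S leU sSU; first by exists S; rewrite addn0.
have /properP[_ [y yU yS]] : S \proper U by rewrite properEcard sSU /=; lia.
have cardyS : #|y |: S| = #|S|.+1 by rewrite cardsU1 yS.
have sySU : y |: S \subset U by rewrite subUset sub1set yU.
have [|G [sySG sGU cardG]] := IH (y |: S) _ sySU; first by rewrite cardyS addSnnS.
exists G; split=> //; first exact: subset_trans (subsetUr _ _) sySG.
by rewrite cardG cardyS addSnnS.
Qed.

Definition prefix_set (M k : nat) : {set 'I_M} := [set a : 'I_M | (a < k)%N].

Lemma card_prefix_set (M k : nat) : (k <= M)%N -> #|prefix_set M k| = k.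
Proof.
move=> leM; have widen_inj : injective (widen_ord leM).
  by move=> i j /(congr1 val) eq_ij; apply: val_inj.
rewrite -[RHS]card_ord -(card_imset _ widen_inj).
apply: eq_card => a; rewrite inE; apply/idP/imsetP => [lt_ak | [i _ ->]].
  by exists (Ordinal lt_ak); last exact: val_inj.
exact: (ltn_ord i).
Qed.

Lemma prefix_setS (M k l : nat) : (k <= l)%N -> prefix_set M k \subset prefix_set M l.
Proof. by move=> le_kl; apply/subsetP => a; rewrite !inE => /leq_trans; apply. Qed.

Lemma coef_fpoly (R : nzRingType) (T : finType) (D : {set {set T}}) (k : nat) :
  (fpoly R D)`_k = (nfaces D k)%:R.
Proof.
rewrite coef_poly; case: ltnP => // ltTk; rewrite /nfaces.
suff -> : [set A in D | #|A| == k] = set0 by rewrite cards0.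
apply/setP => A; rewrite !inE; case: eqP => [eq_Ak|]; last by rewrite andbF.
by have := max_card A; rewrite eq_Ak leqNgt ltTk.
Qed.

Lemma coef_1_add_sum (R : nzRingType) (c : nat -> R) (d k : nat) :
  (1 + \sum_(1 <= i < d.+1) c i *: 'X^i)`_k =
  if k == 0%N then 1 else if (k <= d)%N then c k else 0.
Proof.
rewrite coefD coef1 coef_sum; under eq_bigr do rewrite coefZ coefXn.
have [-> | k_gt0] := posnP k.
  rewrite big1_seq ?addr0 // => i; rewrite mem_index_iota => /and3P[_ i_gt0 _].
  by rewrite eq_sym (gtn_eqF i_gt0) mulr0.
rewrite mulr0n add0r; case: leqP => [le_kd | lt_dk].
  rewrite (bigD1_seq k) ?mem_index_iota ?iota_uniq ?k_gt0 //= eqxx mulr1.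
  by rewrite big1 ?addr0 // => i /negPf; rewrite eq_sym => ->; rewrite mulr0.
rewrite big1_seq // => i; rewrite mem_index_iota => /and3P[_ _ lt_id].
by rewrite gtn_eqF ?mulr0 // (leq_trans lt_id).
Qed.

Section LayeredComplex.

Variables (d : nat) (m n : nat -> nat).
Hypothesis m_nonincr : forall i, (1 <= i <= d)%N -> (m i.+1 <= m i)%N.
Hypothesis n_sandwich :
  forall i, (1 <= i <= d)%N -> ('C(m i.+1, i) <= n i <= 'C(m i, i))%N.

Local Notation T := 'I_(m 1).

Lemma m_nonincr_le (i j : nat) : (1 <= i <= j)%N -> (j <= d.+1)%N -> (m j <= m i)%N.
Proof.
move=> /andP[i_gt0]; elim: j => [|j IH]; first by rewrite leqn0 => /eqP i0; lia.
rewrite leq_eqVlt => /predU1P[<- //| le_ij le_jd].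
by apply: leq_trans (IH le_ij _); [apply: m_nonincr | ]; lia.
Qed.

Definition prefix_draws (k i : nat) : {set {set T}} :=
  [set A : {set T} | A \subset prefix_set (m 1) k & #|A| == i].

Lemma card_prefix_draws (k i : nat) : (k <= m 1)%N -> #|prefix_draws k i| = 'C(k, i).
Proof. by move=> le_k; rewrite cards_draws card_prefix_set. Qed.

Lemma prefix_drawsS (k l i : nat) :
  (k <= l)%N -> prefix_draws k i \subset prefix_draws l i.
Proof.
move=> le_kl; apply/subsetP => A; rewrite !inE => /andP[sAk ->].
by rewrite (subset_trans sAk) ?prefix_setS.
Qed.

Definition layer_spec (i : nat) (G : {set {set T}}) : bool :=
  [&& prefix_draws (m i.+1) i \subset G, G \subset prefix_draws (m i) i & #|G| == n i].

Definition layer (i : nat) : {set {set T}} :=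
  if (1 <= i <= d)%N then odflt set0 [pick G | layer_spec i G] else set0.

Lemma layerP (i : nat) : (1 <= i <= d)%N -> layer_spec i (layer i).
Proof.
move=> i_range; rewrite /layer i_range; case: pickP => [//|no_layer].
have [|G [sSG sGU cardG]] :=
  exists_sandwiched_set (n := n i) (prefix_drawsS i (m_nonincr i_range)).
  by rewrite !card_prefix_draws ?n_sandwich // m_nonincr_le //; lia.
by have := no_layer G; rewrite /layer_spec sSG sGU cardG eqxx.
Qed.

Lemma mem_layer (i : nat) (A : {set T}) : A \in layer i ->
  [/\ (1 <= i <= d)%N, A \subset prefix_set (m 1) (m i) & #|A| = i].
Proof.
rewrite /layer; case: ifP => [i_range | _]; last by rewrite inE.
have /and3P[_ /subsetP sGU _] := layerP i_range; rewrite /layer i_range in sGU.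
by move=> /sGU; rewrite inE => /andP[-> /eqP].
Qed.

Lemma card_layer (i : nat) : #|layer i| = if (1 <= i <= d)%N then n i else 0%N.
Proof.
case: ifP => [/layerP/and3P[_ _ /eqP //] | out_range].
by rewrite /layer out_range cards0.
Qed.

Definition layered_complex : {set {set T}} :=
  [set A : {set T} | (A == set0) || (A \in layer #|A|)].

Lemma layered_complex_simplicial : simplicial_complex layered_complex.
Proof.
split=> [|A C]; first by rewrite inE eqxx.
rewrite !inE => /predU1P[-> | A_in] sCA.
  by rewrite subset0 in sCA; rewrite sCA.
have [-> // | C_neq0] := eqVneq C set0.
have [-> | neq_CA] := eqVneq C A; first by rewrite A_in orbT.
have [/andP[_ le_Ad] sA _] := mem_layer A_in.
have lt_CA : (#|C| < #|A|)%N by rewrite proper_card // properEneq neq_CA.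
have C_range : (1 <= #|C| <= d)%N.
  by rewrite card_gt0 C_neq0 (leq_trans (ltnW lt_CA)).
have /and3P[/subsetP sSG _ _] := layerP C_range.
rewrite sSG ?orbT // inE eqxx andbT (subset_trans sCA) // (subset_trans sA) //.
by apply: prefix_setS; apply: m_nonincr_le; lia.
Qed.

Lemma nfaces_layered_complex (k : nat) :
  nfaces layered_complex k = if k == 0%N then 1%N else #|layer k|.
Proof.
rewrite /nfaces; case: eqP => [-> | /eqP k_neq0].
  rewrite (_ : [set A in _ | _] = [set set0]) ?cards1 //; apply/setP => A.
  by rewrite !inE cards_eq0; case: (A == set0); rewrite ?andbF.
apply: eq_card => A; rewrite !inE.
apply/andP/idP => [[/predU1P[-> | A_in] /eqP cardA] | A_in].
- by rewrite cards0 in cardA; rewrite -cardA eqxx in k_neq0.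
- by rewrite -cardA.
have [_ _ cardA] := mem_layer A_in; rewrite cardA A_in orbT; split=> //.
Qed.

Lemma is_fpoly_of_sandwiched_counts (R : nzRingType) :
  is_fpoly (1 + \sum_(1 <= i < d.+1) (n i)%:R *: 'X^i : {poly R}).
Proof.
exists T, layered_complex; split; first exact: layered_complex_simplicial.
apply/polyP => k; rewrite coef_fpoly coef_1_add_sum nfaces_layered_complex card_layer.
by case: posnP => // _; case: (k <= d)%N.
Qed.

End LayeredComplex.

Section CeilingProfile.

Variables (R : archiRealFieldType) (d : nat) (x : nat -> R).
Hypothesis x_ge : forall i : nat, (1 <= i <= d)%N -> (i.-1)%:R <= x i.
Hypothesis binr_x_nat : forall i : nat, (1 <= i <= d)%N ->
  exists n : nat, (0 < n)%N /\ binr (x i) i = n%:R.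
Hypothesis ceil_le_x : forall i : nat, (2 <= i <= d)%N -> (Num.ceil (x i))%:~R <= x i.-1.

(* [ceilx (d + 1) = 0] makes the lower bound of the top layer vacuous. *)
Definition ceilx (i : nat) : nat := if (i <= d)%N then `|Num.ceil (x i)|%N else 0%N.

Definition coefn (i : nat) : nat := Num.truncn (binr (x i) i).

Lemma natr_ceilx (i : nat) : (1 <= i <= d)%N -> (ceilx i)%:R = (Num.ceil (x i))%:~R :> R.
Proof.
move=> i_range; have /andP[_ le_id] := i_range.
rewrite /ceilx le_id natr_absz ger0_norm //.
by rewrite ceil_ge0 (lt_le_trans _ (x_ge i_range)) // (lt_le_trans (ltrN10 R)).
Qed.

Lemma x_le_ceilx (i : nat) : (1 <= i <= d)%N -> x i <= (ceilx i)%:R.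
Proof. by move=> i_range; rewrite natr_ceilx // ceil_ge. Qed.

Lemma ceilxS_le_x (i : nat) : (1 <= i < d)%N -> (ceilx i.+1)%:R <= x i.
Proof. by move=> i_range; rewrite natr_ceilx ?ceil_le_x //; lia. Qed.

Lemma ceilx_nonincr (i : nat) : (1 <= i <= d)%N -> (ceilx i.+1 <= ceilx i)%N.
Proof.
move=> i_range; have [lt_id | ge_id] := ltnP i d.
  by rewrite -(ler_nat R) (le_trans (ceilxS_le_x _)) ?x_le_ceilx //; lia.
by rewrite /ceilx ltnNge ge_id.
Qed.

Lemma binr_coefn (i : nat) : (1 <= i <= d)%N -> binr (x i) i = (coefn i)%:R.
Proof. by rewrite /coefn => /binr_x_nat[k [_ ->]]; rewrite natrK. Qed.

Lemma coefn_sandwich (i : nat) : (1 <= i <= d)%N ->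
  ('C(ceilx i.+1, i) <= coefn i <= 'C(ceilx i, i))%N.
Proof.
move=> i_range; rewrite -!(ler_nat R) -binr_coefn // -!binr_nat.
apply/andP; split; last exact: ler_binr (x_ge i_range) (x_le_ceilx i_range).
have [lt_id | ge_id] := ltnP i d; last first.
  have /andP[i_gt0 _] := i_range.
  by rewrite /ceilx ltnNge ge_id /= binr_nat bin0n gtn_eqF // binr_coefn.
apply: ler_binr (ceilxS_le_x _); last lia.
have Si_range : (1 <= i.+1 <= d)%N by lia.
apply: le_trans _ (x_le_ceilx Si_range); apply: le_trans _ (x_ge Si_range).
by rewrite ler_nat; lia.
Qed.

End CeilingProfile.

Theorem theorem3p3 (R : realType) (d : nat) (x : nat -> R)
  (hx : forall i : nat, (1 <= i <= d)%N -> (i.-1)%:R <= x i)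
  (hcoef : forall i : nat, (1 <= i <= d)%N ->
     exists n : nat, (0 < n)%N /\ binr (x i) i = n%:R)
  (hreal : real_rooted (1 + \sum_(1 <= i < d.+1) binr (x i) i *: 'X^i))
  (hceil : forall i : nat, (2 <= i <= d)%N -> (Num.ceil (x i))%:~R <= x i.-1) :
  is_fpoly (1 + \sum_(1 <= i < d.+1) binr (x i) i *: 'X^i : {poly R}).
Proof.
rewrite (eq_big_nat _ _ (F2 := fun i => (coefn x i)%:R *: 'X^i)); last first.
  by move=> i i_range; rewrite (binr_coefn hcoef).
apply: (is_fpoly_of_sandwiched_counts (m := ceilx d x)).
  exact: ceilx_nonincr hx hceil.
exact: coefn_sandwich hx hcoef hceil.
Qed.
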